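(* For all integers $n,d\ge0$, $T(n,\omega^d)\le P(n,\omega^d)$.
   Context: $[c]=\{1,\dots,c\}$; ordinals are identified with sets of smaller ordinals; $\approx$ is order-equivalence; $\binom{S}{n}$ is the set of $n$-element subsets. $T(n,S)$ is the least $t\in\mathbb{N}$ such that for every $c\ge1$ and every $\mathrm{COL}:\binom{S}{n}\to[c]$ there is $S'\subseteq S$, $S'\approx S$, with $|\mathrm{COL}(\binom{S'}{n})|\le t$ ($\infty$ if none). Every $\beta<\omega^d\cdot k$ is uniquely $\omega^d b+\sum_{j<d}\omega^j a_j$ with $0\le b<k$, $a_j\in\mathbb{N}$. A coloring rule (CR) on $\binom{\omega^d\cdot k}{n}$ is a pair $(\mathcal{Y},\preceq)$ with $\mathcal{Y}:\{1,\dots,n\}\to\{0,\dots,k-1\}$ and $\preceq$ a total preorder on $I=\{(i,j):1\le i\le n,0\le j<d\}$ (with induced equivalence $\equiv$ and strict part $\prec$) such that: (1) if $d\ge1$, $(i,0)\prec(i',0)$ for $i<i'$; if $d=0$, $\mathcal{Y}(i)<\mathcal{Y}(i')$ for $i<i'$; (2) $(i,j)\equiv(i',j)$ for some $j$ implies $\mathcal{Y}(i)=\mathcal{Y}(i')$; (3) $(i,j)\prec(i,j')$ for $j>j'$; (4) $(i,j)\equiv(i',j')$ implies $j=j'$; (5) for $j>0$, $(i,j)\not\equiv(i',j)$ implies $(i,j-1)\not\equiv(i',j-1)$. $P(n,\omega^d\cdot k)$ is the total number of CRs on $\binom{\omega^d\cdot k}{n}$, and $P(n,\omega^d)=P(n,\omega^d\cdot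 1)$. *)

From HB Require Import structures.
From mathcomp Require Import all_boot all_order finmap.
Set Implicit Arguments. Unset Strict Implicit. Unset Printing Implicit Defensive.
Local Open Scope fset_scope.

(* The ordinal omega^d: every beta < omega^d is uniquely
   sum_{j<d} omega^j a_j with a_j in nat; we represent beta by the
   d-tuple (a_0, ..., a_{d-1}) (a_j = tnth x j).  The ordinal order is
   the lexicographic order comparing the highest index first. *)
Definition olt (d : nat) (x y : d.-tuple nat) : Prop :=
  exists j : 'I_d, tnth x j < tnth y j /\
    (forall j' : 'I_d, (j < j')%N -> tnth x j' = tnth y j').

(* [T_works n d t] : for every c >= 1 and every coloring
   COL : binom(omega^d, n) -> [c] there is S' subset of omega^d with
   S' order-equivalent to omega^d (S' = range f, f an order embedding
   omega^d -> omega^d, i.e. an order isomorphism onto S') such that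
   COL takes at most t colors on binom(S', n).
   T(n, omega^d) <= t  iff  T_works n d t  (T is the least such t, and the
   set of such t is upward closed). *)
Definition T_works (n d t : nat) : Prop :=
  forall c : nat, 1 <= c ->
  forall COL : {fset (d.-tuple nat)} -> nat,
    (forall A : {fset (d.-tuple nat)}, #|` A| = n -> 1 <= COL A <= c) ->
    exists f : d.-tuple nat -> d.-tuple nat,
      (forall x y, olt x y -> olt (f x) (f y)) /\
      exists s : seq nat, size s <= t /\
        forall A : {fset (d.-tuple nat)}, #|` A| = n ->
          (forall x, x \in A -> exists y, f y = x) -> COL A \in s.

(* Index set I = {(i,j) : 1<=i<=n, 0<=j<d}; i is shifted to 0..n-1. *)
Definition Iset (n d : nat) := ('I_n * 'I_d)%type.

(* Coloring rules on binom(omega^d * k, n): Y : [n] -> {0..k-1},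
   and a total preorder given by its relation le on I. *)
Definition is_CR (n d k : nat) (Y : {ffun 'I_n -> 'I_k})
    (le : {ffun Iset n d * Iset n d -> bool}) : bool :=
  let le' := fun x y => le (x, y) in
  let eqv := fun x y => le' x y && le' y x in
  let lt := fun x y => le' x y && ~~ le' y x in
  [&&
      [forall x, forall y, le' x y || le' y x],
      [forall x, forall y, forall z, le' x y ==> le' y z ==> le' x z],
      [forall i : 'I_n, forall i' : 'I_n, forall j : 'I_d,
         ((i < i')%N && (j == 0 :> nat)) ==> lt (i, j) (i', j)],
      (d == 0) ==> [forall i : 'I_n, forall i' : 'I_n,
         (i < i')%N ==> (Y i < Y i')%N],
      [forall i : 'I_n, forall i' : 'I_n, forall j : 'I_d,
         eqv (i, j) (i', j) ==> (Y i == Y i')],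
      [forall i : 'I_n, forall j : 'I_d, forall j' : 'I_d,
         (j' < j)%N ==> lt (i, j) (i, j')],
      [forall x : Iset n d, forall y : Iset n d, eqv x y ==> (x.2 == y.2)] &
      [forall i : 'I_n, forall i' : 'I_n, forall j : 'I_d, forall j' : 'I_d,
         (j'.+1 == j :> nat) ==> ~~ eqv (i, j) (i', j) ==>
           ~~ eqv (i, j') (i', j')]].

(* P(n, omega^d * k): the number of coloring rules. *)
Definition P (n d k : nat) : nat :=
  #|[set p : {ffun 'I_n -> 'I_k} * {ffun Iset n d * Iset n d -> bool}
       | is_CR p.1 p.2]|.

(* Code the k highest coordinates x_{d-1}, ..., x_{d-k} of x in omega^d by a
   number c_k(x), iterating an injective pairing that increases with the new
   coordinate and exceeds the previous code.  For every increasing h : nat -> nat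
   the map whose j-th coordinate is h (c_{d-j}(x)) is an order embedding of
   omega^d into itself.  An n-set in its image is recovered from the n x d
   matrix of codes of its preimages, listed by increasing full code c_d, and
   the order pattern (total preorder) of this matrix is a coloring rule.  The
   infinite Ramsey theorem, applied at once to the finitely many order patterns,
   yields an h for which the colour of h applied to such a matrix depends only
   on its pattern, so at most P(n, omega^d) colours occur on the image. *)

From HB Require Import structures.
From mathcomp Require Import all_boot all_order finmap.
From mathcomp Require Import zify.
From Stdlib Require Import ClassicalEpsilon.
Set Implicit Arguments. Unset Strict Implicit. Unset Printing Implicit Defensive.

Lemma size_undup_map_eq (T U V : eqType) (f : T -> U) (g : T -> V) (s : seq T) :
  (forall a b, (f a == f b) = (g a == g b)) ->
  size (undup (map f s)) = size (undup (map g s)).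
Proof.
move=> eq_fg; elim: s => //= a s IH.
have -> : (f a \in map f s) = (g a \in map g s).
  apply/mapP/mapP => -[b bs /eqP eq_ab]; exists b => //; apply/eqP.
    by rewrite -eq_fg.
  by rewrite eq_fg.
by case: (g a \in map g s); rewrite /= IH.
Qed.

Lemma exists_map_preimage (T : Type) (U : eqType) (f : T -> U) (s : seq U) :
  (forall x, x \in s -> exists y, f y = x) -> exists ys, map f ys = s.
Proof.
elim: s => [|x s IH] s_range; first by exists [::].
have [y <-] := s_range x (mem_head x s).
have [ys <-] := IH (fun x' x's => s_range x' (mem_behead (s := x :: s) x's)).
by exists (y :: ys).
Qed.

Lemma sort_preimage_by_key (T U : eqType) (f : T -> U) (key : T -> nat) (s : seq U) :
  injective key -> uniq s -> (forall x, x \in s -> exists y, f y = x) ->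
  exists ys, perm_eq (map f ys) s /\ sorted ltn (map key ys).
Proof.
move=> key_inj uniq_s /exists_map_preimage [ys eq_ys].
exists (sort (relpre key leq) ys); split; first by rewrite -eq_ys perm_map ?perm_sort.
rewrite ltn_sorted_uniq_leq (map_inj_uniq key_inj) sort_uniq sorted_map.
rewrite (sort_sorted (fun a b => leq_total (key a) (key b))) andbT.
by move: uniq_s; rewrite -eq_ys => /map_uniq.
Qed.

Lemma colors_factor_through (U : finType) (S : {set U}) (T : Type) (g : T -> U)
    (col : T -> nat) :
  (forall a b, g a = g b -> col a = col b) ->
  exists2 s : seq nat, size s <= #|S| & forall a, g a \in S -> col a \in s.
Proof.
move=> col_g.
have [col_of col_ofP] : exists col_of : U -> nat, forall u a, g a = u -> col a = col_of u.
  apply: (choice (fun u v => forall a, g a = u -> col a = v)) => u.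
  have [[a ga]|none] := classic (exists a, g a = u); last first.
    by exists 0 => a ga; case: none; exists a.
  by exists (col a) => b gb; apply: col_g; rewrite ga gb.
exists (map col_of (enum S)); first by rewrite size_map cardE.
by move=> a aS; rewrite (col_ofP _ a erefl) map_f ?mem_enum.
Qed.

Lemma bounded_infinitely_often c (col : nat -> nat) :
  (forall k, col k <= c) -> exists c0, forall N, exists k, (N <= k) && (col k == c0).
Proof.
elim: c col => [|c IH] col col_le.
  by exists 0 => N; exists N; rewrite leqnn -leqn0 col_le.
have [inf|] := classic (forall N, exists k, (N <= k) && (col k == c.+1)).
  by exists c.+1.
move=> /not_all_ex_not [N0 fin].
have [|c0 inf] := IH (fun k => col (N0 + k)).
  move=> k; rewrite -ltnS ltn_neqAle col_le andbT; apply/negP => /eqP eq_c.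
  by apply: fin; exists (N0 + k); rewrite leq_addr eq_c /=.
exists c0 => N; have [k /andP [le_Nk eq_c0]] := inf N.
by exists (N0 + k); rewrite eq_c0 andbT (leq_trans le_Nk) ?leq_addl.
Qed.

Lemma infinitely_often_subseq (P : pred nat) :
  (forall N, exists k, (N <= k) && P k) ->
  exists2 q, {homo q : a b / a < b} & forall i, P (q i).
Proof.
move=> inf; pose next N := xchoose (inf N).
have [next_ge next_P] : (forall N, N <= next N) /\ (forall N, P (next N)).
  by split=> N; have /andP [] := xchooseP (inf N).
pose q i := iter i (fun k => next k.+1) (next 0).
exists q; last by case=> [|i]; apply: next_P.
by apply: homo_ltn => [|i]; [exact: ltn_trans | apply: next_ge].
Qed.

Lemma infinite_pigeonhole c (col : nat -> nat) : (forall k, col k <= c) ->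
  exists c0, exists2 q, {homo q : a b / a < b} & forall i, col (q i) = c0.
Proof.
move=> /bounded_infinitely_often [c0 /infinitely_often_subseq [q q_incr q_col]].
by exists c0, q => // i; apply/eqP.
Qed.

Lemma sorted_map_range (f G : nat -> nat) (W : seq nat) :
  {homo G : a b / a < b} -> sorted ltn (map f W) ->
  (forall w, w \in W -> exists t, f w = G t) ->
  exists2 V, sorted ltn V & map f W = map G V.
Proof.
move=> G_incr sorted_fW W_range.
have [V eq_V] : exists V, map G V = map f W.
  by apply: exists_map_preimage => _ /mapP [w /W_range [t ->] ->]; exists t.
exists V => //; move: sorted_fW; rewrite -eq_V sorted_map.
by apply: sub_sorted => a b /=; rewrite (leqW_mono (leq_mono G_incr)).
Qed.

Definition homogeneous_with (m : nat) (K : seq nat -> nat) (h : nat -> nat) (col : nat) :=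
  forall V, sorted ltn V -> size V = m -> K (map h V) = col.

Definition homogeneous (m : nat) (K : seq nat -> nat) (h : nat -> nat) :=
  exists col, homogeneous_with m K h col.

Lemma homogeneous_comp m K h g : {homo g : a b / a < b} ->
  homogeneous m K h -> homogeneous m K (h \o g).
Proof.
move=> g_incr [col hom]; exists col => V sorted_V size_V.
by rewrite map_comp hom ?size_map // (homo_sorted g_incr).
Qed.

Definition tail_coloring (K : seq nat -> nat) (g : nat -> nat) (s : seq nat) :=
  K (g 0 :: map (g \o succn) s).

Section RamseyStep.
Variables (m c : nat) (K : seq nat -> nat).
Hypothesis K_bounded : forall s, K s <= c.
Variable sel : (nat -> nat) -> (nat -> nat) * nat.
Hypothesis sel_incr : forall g, {homo (sel g).1 : a b / a < b}.
Hypothesis sel_hom : forall g, homogeneous_with m (tail_coloring K g) (sel g).1 (sel g).2.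

(* H k.+1 enumerates a subset of H k minus its least point p k, chosen so that
   p k together with any m-set of H k.+1 has colour col k. *)
Let H k := iter k (fun g => g \o succn \o (sel g).1) id.
Let p k := H k 0.
Let col k := (sel (H k)).2.

Let H_incr k : {homo H k : a b / a < b}.
Proof. by elim: k => [//|k IHk] a b lt_ab /=; apply: IHk; rewrite ltnS sel_incr. Qed.

Let H_range k l : k <= l -> forall t, exists t', H l t = H k t'.
Proof.
elim: l => [|l IHl]; first by rewrite leqn0 => /eqP-> t; exists t.
rewrite leq_eqVlt => /predU1P [-> t|]; first by exists t.
by rewrite ltnS => /IHl IHk t; apply: IHk.
Qed.

Let p_incr : {homo p : a b / a < b}.
Proof. by apply: homo_ltn => [|k]; [exact: ltn_trans | apply: H_incr]. Qed.

Let col_bounded k : col k <= c.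
Proof.
by rewrite /col -(sel_hom (H k) (iota_ltn_sorted 0 m) (size_iota 0 m)); apply: K_bounded.
Qed.

Let p_col k V : sorted ltn V -> size V = m -> K (p k :: map (H k.+1) V) = col k.
Proof.
move=> sorted_V size_V.
by rewrite /col -(sel_hom _ sorted_V size_V) /tail_coloring -map_comp.
Qed.

Lemma ramsey_step : exists2 h, {homo h : a b / a < b} & homogeneous m.+1 K h.
Proof.
have [c0 [q q_incr q_col]] := infinite_pigeonhole col_bounded.
exists (p \o q) => [a b lt_ab|]; first by apply/p_incr/q_incr.
exists c0 => -[//|v V] /=; rewrite path_sortedE; last exact: ltn_trans.
move=> /andP [/allP gt_v sorted_V] [size_V].
have [U sorted_U eq_U] : exists2 U, sorted ltn U & map p (map q V) = map (H (q v).+1) U.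
  apply: sorted_map_range (H_incr _) _ _.
    by rewrite -map_comp; apply: homo_sorted sorted_V => a b lt_ab; apply/p_incr/q_incr.
  by move=> _ /mapP [u /gt_v lt_vu ->]; apply: H_range; apply: q_incr.
by rewrite map_comp eq_U p_col // -(size_map (H (q v).+1)) -eq_U !size_map.
Qed.

End RamseyStep.

Theorem ramsey m c (K : seq nat -> nat) : (forall s, K s <= c) ->
  exists2 h, {homo h : a b / a < b} & homogeneous m K h.
Proof.
elim: m K => [|m IH] K K_bounded.
  by exists id => //; exists (K [::]) => V _ /size0nil ->.
have /choice [sel selP] : forall g, exists hc : (nat -> nat) * nat,
    {homo hc.1 : a b / a < b} /\ homogeneous_with m (tail_coloring K g) hc.1 hc.2.
  move=> g; have [h h_incr [col hom]] := IH (tail_coloring K g) (fun s => K_bounded _).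
  by exists (h, col).
exact: (ramsey_step K_bounded (fun g => (selP g).1) (fun g => (selP g).2)).
Qed.

Lemma ramsey_simultaneous (T : finType) (M : T -> nat) c (K : T -> seq nat -> nat) :
  (forall t s, K t s <= c) ->
  exists2 h, {homo h : a b / a < b} & forall t, homogeneous (M t) (K t) h.
Proof.
move=> K_bounded.
suff [h h_incr hom] : exists2 h, {homo h : a b / a < b} &
    forall t, t \in enum T -> homogeneous (M t) (K t) h.
  by exists h => // t; apply: hom; rewrite mem_enum.
elim: (enum T) => [|t J [h1 h1_incr hom1]]; first by exists id.
have [h2 h2_incr [col hom2]] := ramsey (M t) (fun s => K_bounded t (map h1 s)).
exists (h1 \o h2) => [a b lt_ab|t']; first by apply/h1_incr/h2_incr.
rewrite inE => /predU1P [->|t'J]; last exact/homogeneous_comp/hom1.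
by exists col => V sorted_V size_V; rewrite map_comp hom2.
Qed.

Section OrderPattern.
Variable I : finType.

Definition order_pattern (phi : {ffun I -> nat}) : {ffun I * I -> bool} :=
  [ffun p => phi p.1 <= phi p.2].

Definition values (phi : {ffun I -> nat}) : seq nat := sort leq (undup (codom phi)).

Lemma values_sorted phi : sorted ltn (values phi).
Proof.
by rewrite ltn_sorted_uniq_leq sort_uniq undup_uniq sort_sorted //; exact: leq_total.
Qed.

Lemma mem_values phi : values phi =i codom phi.
Proof. by move=> v; rewrite mem_sort mem_undup. Qed.

Lemma size_values phi : size (values phi) < #|I|.+1.
Proof. by rewrite ltnS size_sort -(size_codom phi) size_undup. Qed.

Lemma order_pattern_le phi psi : order_pattern phi = order_pattern psi ->
  forall a b, (phi a <= phi b) = (psi a <= psi b).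
Proof. by move=> /ffunP epat a b; have := epat (a, b); rewrite !ffunE. Qed.

Lemma size_values_pattern phi psi : order_pattern phi = order_pattern psi ->
  size (values phi) = size (values psi).
Proof.
move/order_pattern_le => le_pat; rewrite !size_sort.
by apply: size_undup_map_eq => a b; rewrite !eqn_leq !le_pat.
Qed.

Lemma order_pattern_comp h (phi : {ffun I -> nat}) : {homo h : a b / a < b} ->
  order_pattern [ffun x => h (phi x)] = order_pattern phi.
Proof. by move=> h_incr; apply/ffunP => p; rewrite !ffunE (leq_mono h_incr). Qed.

Lemma order_pattern_eq_at (phi psi : {ffun I -> nat}) x :
  (forall a b, (phi a <= phi b) = (psi a <= psi b)) ->
  {subset codom phi <= codom psi} ->
  (forall y, minn (phi y) (psi y) < minn (phi x) (psi x) -> phi y = psi y) ->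
  phi x <= psi x -> phi x = psi x.
Proof.
move=> le_pat sub_codom IH; rewrite leq_eqVlt => /predU1P [//|lt_x].
have /codomP [y eq_y] := sub_codom _ (codom_f phi x).
have lt_y : phi y < phi x by rewrite ltnNge le_pat -ltnNge -eq_y.
have eq_yy : phi y = psi y.
  by apply: IH; rewrite (minn_idPl (ltnW lt_x)) (leq_ltn_trans (geq_minl _ _)).
by move: lt_y; rewrite eq_yy -eq_y ltnn.
Qed.

Lemma order_pattern_inj (phi psi : {ffun I -> nat}) :
  order_pattern phi = order_pattern psi -> codom phi =i codom psi -> phi = psi.
Proof.
move=> /order_pattern_le le_pat eq_codom.
suff min_eq v x : minn (phi x) (psi x) = v -> phi x = psi x.
  by apply/ffunP => x; apply: min_eq.
elim/ltn_ind: v x => v IH x ev.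
have IH' y : minn (phi y) (psi y) < minn (phi x) (psi x) -> phi y = psi y.
  by rewrite ev => /IH; apply.
case: (leqP (phi x) (psi x)) => [|/ltnW le_x].
  by apply: order_pattern_eq_at => // w; rewrite eq_codom.
apply/esym/order_pattern_eq_at => // [w|y]; first by rewrite eq_codom.
by rewrite minnC [minn (psi x) _]minnC => /IH' ->.
Qed.

Lemma ramsey_pattern c (K : {ffun I -> nat} -> nat) : (forall phi, K phi <= c) ->
  exists2 h, {homo h : a b / a < b} & forall phi psi,
    order_pattern phi = order_pattern psi ->
    K [ffun x => h (phi x)] = K [ffun x => h (psi x)].
Proof.
move=> K_bounded.
(* A function is determined by its order pattern and its set of values, so
   K (h \o phi) is a colouring of the increasing list map h (values phi),
   indexed by the pattern and the number of values of phi. *)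
pose rebuild t (V : seq nat) := epsilon (inhabits [ffun=> 0])
  (fun psi : {ffun I -> nat} => order_pattern psi = t /\ codom psi =i V).
have rebuild_comp h phi : {homo h : a b / a < b} ->
    rebuild (order_pattern phi) (map h (values phi)) = [ffun x => h (phi x)].
  move=> h_incr; set hphi := [ffun x => h (phi x)].
  have codom_hphi : codom hphi =i map h (values phi).
    move=> v; apply/codomP/mapP => [[x ->]|[u]].
      by exists (phi x); rewrite ?mem_values ?codom_f ?ffunE.
    by rewrite mem_values => /codomP [x ->] ->; exists x; rewrite ffunE.
  have [] := epsilon_spec (inhabits [ffun=> 0]) (fun psi => order_pattern psi = _ /\ _)
    (ex_intro _ hphi (conj (order_pattern_comp _ h_incr) codom_hphi)).
  move=> epat ecodom; apply: order_pattern_inj; first by rewrite epat order_pattern_comp.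
  by move=> v; rewrite ecodom codom_hphi.
pose K' (tr : {ffun I * I -> bool} * 'I_#|I|.+1) V := K (rebuild tr.1 V).
have [h h_incr hom] :=
  ramsey_simultaneous (fun tr => val tr.2) (fun tr V => K_bounded _ : K' tr V <= c).
exists h => // phi psi epat.
have [col hcol] := hom (order_pattern psi, Ordinal (size_values psi)).
rewrite -(rebuild_comp h phi) // -(rebuild_comp h psi) // epat.
have := hcol _ (values_sorted phi) (size_values_pattern epat).
have := hcol _ (values_sorted psi) (erefl _).
by rewrite /K' /= => -> ->.
Qed.

End OrderPattern.

Definition pairn (a c : nat) : nat := (a + c).+1 * (a + c).+1 + c.

Lemma pairn_inj a c a' c' : pairn a c = pairn a' c' -> a = a' /\ c = c'.
Proof.
rewrite /pairn => eq_p.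
have eq_s : a + c = a' + c' by case: (ltngtP (a + c) (a' + c')) => // lt_s; nia.
by split; nia.
Qed.

Lemma ltn_pairn a c : c < pairn a c.
Proof. rewrite /pairn; nia. Qed.

Lemma ltn_pairnl a a' c : a < a' -> pairn a c < pairn a' c.
Proof. rewrite /pairn; nia. Qed.

Section TopCode.
Variable d : nat.

Fixpoint top_code (x : d.-tuple nat) (k : nat) : nat :=
  if k is k'.+1 then pairn (nth 0 x (d - k)) (top_code x k') else 0.

Lemma top_code_incr (x : d.-tuple nat) : {homo top_code x : k l / k < l}.
Proof. by apply: homo_ltn => [|k]; [exact: ltn_trans | exact: ltn_pairn]. Qed.

Lemma eq_top_code (x y : d.-tuple nat) k :
  (forall i, d - k <= i -> nth 0 x i = nth 0 y i) -> top_code x k = top_code y k.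
Proof.
elim: k => [//|k IH] agree /=; rewrite agree // IH // => i le_i; apply: agree; lia.
Qed.

Lemma top_code_inj (x y : d.-tuple nat) k l : top_code x k = top_code y l ->
  k = l /\ forall i, d - k <= i -> nth 0 x i = nth 0 y i.
Proof.
elim: k l => [|k IH] [|l] /=.
- by split=> // i; rewrite subn0 => le_di; rewrite !nth_default ?size_tuple.
- by move=> eq0; have := ltn_pairn (nth 0 y (d - l.+1)) (top_code y l); rewrite -eq0.
- by move=> eq0; have := ltn_pairn (nth 0 x (d - k.+1)) (top_code x k); rewrite eq0.
move=> /pairn_inj [eq_top /IH [eq_kl agree]]; split; first by rewrite eq_kl.
move=> i le_i; case: (ltnP i (d - k)) => [lt_i|]; last exact: agree.
have -> : i = d - k.+1 by lia.
by rewrite eq_top eq_kl.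
Qed.

Lemma top_code_full_inj : injective (fun x => top_code x d).
Proof.
move=> x y /top_code_inj [_ agree].
by apply: eq_from_tnth => j; rewrite !(tnth_nth 0) agree // subnn.
Qed.

Definition code_embed (h : nat -> nat) (x : d.-tuple nat) : d.-tuple nat :=
  [tuple h (top_code x (d - j)) | j < d].

Lemma nth_agree_above (x y : d.-tuple nat) (j : nat) :
  (forall j' : 'I_d, j < j' -> tnth x j' = tnth y j') ->
  forall i, j < i -> nth 0 x i = nth 0 y i.
Proof.
move=> agree i lt_ji; case: (ltnP i d) => [lt_id|le_di].
  by have := agree (Ordinal lt_id) lt_ji; rewrite !(tnth_nth 0).
by rewrite !nth_default ?size_tuple.
Qed.

Lemma code_embed_olt h x y : {homo h : a b / a < b} ->
  olt x y -> olt (code_embed h x) (code_embed h y).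
Proof.
move=> h_incr [j [lt_j /nth_agree_above agree]]; have lt_jd := ltn_ord j.
exists j; split => [|j' lt_jj']; rewrite !tnth_mktuple.
  apply: h_incr; have -> : d - j = (d - j.+1).+1 by lia.
  rewrite /= (@eq_top_code x y) => [|i le_i]; last by apply: agree; lia.
  have -> : d - (d - j.+1).+1 = j by lia.
  by rewrite ltn_pairnl // -!(tnth_nth 0).
by congr h; apply: eq_top_code => i le_i; apply: agree; have := ltn_ord j'; lia.
Qed.

End TopCode.

Definition zero_labels (n : nat) : {ffun 'I_n -> 'I_1} := [ffun=> ord0].

Lemma is_CR_order_pattern n d (psi : {ffun Iset n d -> nat}) :
  (forall (i i' : 'I_n) (j : 'I_d), i < i' -> j = 0 :> nat ->
     psi (i, j) < psi (i', j)) ->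
  (d = 0 -> n <= 1) ->
  (forall i (j j' : 'I_d), j' < j -> psi (i, j) < psi (i, j')) ->
  (forall p q, psi p = psi q -> p.2 = q.2) ->
  (forall i i' (j j' : 'I_d), j'.+1 = j ->
     psi (i, j') = psi (i', j') -> psi (i, j) = psi (i', j)) ->
  is_CR (zero_labels n) (order_pattern psi).
Proof.
move=> lt_first small_n lt_digits eq_level eq_next.
have le_pat p q : order_pattern psi (p, q) = (psi p <= psi q) by rewrite ffunE.
have lt_pat p q :
    order_pattern psi (p, q) && ~~ order_pattern psi (q, p) = (psi p < psi q).
  by rewrite !le_pat -ltnNge andb_idl // => /ltnW.
have eq_pat p q :
    order_pattern psi (p, q) && order_pattern psi (q, p) = (psi p == psi q).
  by rewrite !le_pat eqn_leq.
rewrite /is_CR; apply/and5P; split.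
- by apply/forallP => p; apply/forallP => q; rewrite !le_pat leq_total.
- apply/forallP => p; apply/forallP => q; apply/forallP => r; rewrite !le_pat.
  by apply/implyP => le_pq; apply/implyP; apply: leq_trans.
- apply/forallP => i; apply/forallP => i'; apply/forallP => j.
  by apply/implyP => /andP [lt_i /eqP j0]; rewrite lt_pat lt_first.
- apply/implyP => /eqP /small_n n1; apply/forallP => i; apply/forallP => i'.
  by apply/implyP => lt_i; have := ltn_ord i'; lia.
apply/and4P; split.
- apply/forallP => i; apply/forallP => i'; apply/forallP => j.
  by rewrite !ffunE implybT.
- apply/forallP => i; apply/forallP => j; apply/forallP => j'.
  by apply/implyP => lt_j; rewrite lt_pat lt_digits.
- apply/forallP => p; apply/forallP => q.
  by rewrite eq_pat; apply/implyP => /eqP /eq_level ->.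
apply/forallP => i; apply/forallP => i'; apply/forallP => j; apply/forallP => j'.
apply/implyP => /eqP eq_j; rewrite !eq_pat; apply/implyP; apply: contra.
by move=> /eqP /(eq_next _ _ _ _ eq_j) ->.
Qed.

Local Open Scope fset_scope.

Section CodeMatrix.
Variables n d : nat.

Definition code_matrix (ys : seq (d.-tuple nat)) : {ffun Iset n d -> nat} :=
  [ffun p : Iset n d => top_code (nth (nseq_tuple d 0) ys p.1) (d - p.2)].

Lemma is_CR_code_matrix ys :
  size ys = n -> sorted ltn [seq top_code y d | y <- ys] ->
  is_CR (zero_labels n) (order_pattern (code_matrix ys)).
Proof.
move=> size_ys sorted_keys; set y := nth (nseq_tuple d 0) ys.
have key_lt (i i' : 'I_n) : i < i' -> top_code (y i) d < top_code (y i') d.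
  rewrite -!(nth_map (nseq_tuple d 0) 0 (fun y => top_code y d)) ?size_ys //.
  by apply: (sorted_ltn_nth ltn_trans 0 sorted_keys); rewrite inE size_map size_ys.
apply: is_CR_order_pattern
  => [i i' j lt_i j0|d0|i j j' lt_j|[i j] [i' j']|i i' j j' eq_j]; rewrite ?ffunE /=.
- by rewrite j0 subn0 key_lt.
- rewrite leqNgt; apply/negP => lt_1n.
  have := key_lt (Ordinal (ltnW lt_1n)) (Ordinal lt_1n) (ltnSn 0).
  by rewrite !(congr1 (top_code _) d0) ltnn.
- by apply: top_code_incr; have := ltn_ord j; lia.
- move=> /top_code_inj [eq_j _]; apply: val_inj => /=.
  by have := ltn_ord j; have := ltn_ord j'; lia.
move=> /top_code_inj [_ agree]; apply: eq_top_code => k le_k; apply: agree; lia.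
Qed.

Definition rows (phi : {ffun Iset n d -> nat}) : {fset d.-tuple nat} :=
  [fset x in [seq [tuple phi (i, j) | j < d] | i <- enum 'I_n]].

Lemma mem_rows_code_matrix h ys : size ys = n ->
  rows [ffun p => h (code_matrix ys p)] =i map (code_embed h) ys.
Proof.
move=> size_ys x; rewrite in_fset /=; congr (x \in _).
have enum_ys : map (nth (nseq_tuple d 0) ys) (map val (enum 'I_n)) = ys.
  by rewrite val_enum_ord -size_ys -/(mkseq _ _) mkseq_nth.
rewrite -[in RHS]enum_ys -!map_comp; apply: eq_map => i; apply: eq_from_tnth => j.
by rewrite !tnth_mktuple !ffunE.
Qed.

End CodeMatrix.

Theorem theorem8p3 (n d : nat) : T_works n d (P n d 1).
Proof.
move=> c _ COL COL_bounded.
(* Truncation makes K bounded also on matrices whose rows do not form an n-set. *)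
pose K (phi : {ffun Iset n d -> nat}) := minn (COL (rows phi)) c.
have [h h_incr hK] := @ramsey_pattern _ c K (fun phi => geq_minr _ _).
exists (code_embed h); split => [x y|]; first exact: code_embed_olt.
pose g (psi : {ffun Iset n d -> nat}) := (zero_labels n, order_pattern psi).
have [s s_size s_colors] := @colors_factor_through _ [set p | is_CR p.1 p.2] _ g
  (fun psi => K [ffun x => h (psi x)]) (fun phi psi eq_g => hK phi psi (congr1 snd eq_g)).
exists s; split => // A A_card A_range.
have [ys [ys_A ys_sorted]] :=
  sort_preimage_by_key (@top_code_full_inj d) (fset_uniq A) A_range.
have ys_size : size ys = n by rewrite -A_card -(perm_size ys_A) size_map.
have -> : COL A = K [ffun x => h (code_matrix n ys x)].
  have rows_A : rows [ffun x => h (code_matrix n ys x)] = A.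
    by apply/fsetP => x; rewrite mem_rows_code_matrix // (perm_mem ys_A).
  by rewrite /K rows_A; apply/esym/minn_idPl; case/andP: (COL_bounded A A_card).
by apply: s_colors; rewrite inE is_CR_code_matrix.
Qed.
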